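(* Let $T,T'\in\overline{\mathrm{Sub}}(X,1)$. (1) If $T\neq T'$ then $\mathcal{R}(T)\cap\mathcal{R}(T')=\emptyset$. (2) If $gT=T'$ for some $g\in F_N$, then $(\mu\times\nu)(\mathcal{R}(T))=(\mu\times\nu)(\mathcal{R}(T'))$ for all $\mu,\nu\in\mathcal{S}\mathrm{Curr}(F_N)$. (3) The map $\mathcal{S}\mathrm{Curr}(F_N)\times\mathcal{S}\mathrm{Curr}(F_N)\to\mathbb{R}_{\geq0}$, $(\mu,\nu)\mapsto(\mu\times\nu)(\mathcal{R}(T))$, is continuous and $\mathbb{R}_{\geq0}$-bilinear.
   Context: $N\geq2$, $F_N$ free with free basis $A$, $X$ its Cayley graph (a tree, vertex set $F_N$), $\partial X$ its boundary. $\mathcal{C}_N$: closed subsets of $\partial X$ with at least two points, Vietoris (Hausdorff) topology; $\mathcal{S}\mathrm{Curr}(F_N)$: $F_N$-invariant Borel measures on $\mathcal{C}_N$ finite on compact sets, with the weak-* topology. For $S\in\mathcal{C}_N$, $\mathrm{Conv}(S)$ is the union of bi-infinite geodesics in $X$ joining points of $S$. $\overline{\mathrm{Sub}}(X,1)$: the set of finite subtrees of $X$ containing the vertex $1$ (including the one-vertex tree $\{1\}$). $\mathcal{R}(T)=\{(S_1,S_2)\in\mathcal{C}_N\times\mathcal{C}_N:\mathrm{Conv}(S_1)\cap\mathrm{Conv}(S_2)=T\}$. *)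

From HB Require Import structures.
From mathcomp Require Import all_boot all_order all_algebra.
From mathcomp Require Import all_classical all_reals all_analysis.
Set Implicit Arguments. Unset Strict Implicit. Unset Printing Implicit Defensive.
Import Order.TTheory GRing.Theory Num.Theory.
Import numFieldNormedType.Exports.
Local Open Scope classical_set_scope.

(* Free group F_N of rank N = n.+2 (this encodes N >= 2).
   Letters: (i, true) = a_i, (i, false) = a_i^{-1}, for i : 'I_N. *)
Section FreeGroup.
Variable n : nat.
Notation N := n.+2.

Definition letter := ('I_N * bool)%type.
Definition linv (x : letter) : letter := (x.1, ~~ x.2).

Definition reduced (w : seq letter) : bool := sorted (fun a b => b != linv a) w.

(* Elements of F_N = vertices of the Cayley tree X = reduced words. *)
Definition vertex := {w : seq letter | reduced w}.

Definition vone : vertex := exist _ [::] erefl.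

Definition pushw (x : letter) (w : seq letter) : seq letter :=
  if w is y :: w' then (if y == linv x then w' else x :: w) else [:: x].
Definition mulw (g w : seq letter) : seq letter := foldr pushw w g.

(* Cayley graph X of F_N w.r.t. the free basis A: g -- g x for x in A^{+-1} *)
Definition adj (u v : vertex) : bool :=
  [exists x : letter, val v == mulw (val u) [:: x]].

(* Sub(X,1) : finite subtrees of X containing the vertex 1 (a subtree of a tree
   is determined by its vertex set). *)
Definition connected_vset (T : set vertex) : Prop :=
  forall u v, T u -> T v ->
    exists p : seq vertex, [/\ path adj u p, last u p = v & forall w, w \in p -> T w].
Definition subtree1 (T : set vertex) : Prop :=
  [/\ finite_set T, T vone & connected_vset T].

Definition vtranslate (g : vertex) (T : set vertex) : set vertex :=
  [set v | exists u, T u /\ val v = mulw (val g) (val u)].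

(* Boundary dX: infinite reduced words (geodesic rays from 1). *)
Definition bdry := {xi : nat -> letter | forall k, xi k.+1 != linv (xi k)}.

(* cylinder (shadow) topology on dX *)
Definition bopen (U : set bdry) : Prop :=
  forall xi, U xi -> exists m, forall eta : bdry,
    (forall i, (i < m)%N -> sval eta i = sval xi i) -> U eta.
Definition bclosed (S : set bdry) : Prop := bopen (~` S).

Definition pushb (x : letter) (f : nat -> letter) : nat -> letter :=
  if f 0%N == linv x then (fun k => f k.+1)
  else (fun k => if k is k'.+1 then f k' else x).
Definition actb (g : seq letter) (f : nat -> letter) : nat -> letter :=
  foldr pushb f g.

Definition CNprop (S : set bdry) : Prop :=
  bclosed S /\ exists xi eta, [/\ S xi, S eta & xi <> eta].
Definition CN := {S : set bdry | CNprop S}.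

Let c0 : nat -> letter := fun _ => (ord0, true).
Let c1 : nat -> letter := fun _ => (ord0, false).
Let c0P : forall k, c0 k.+1 != linv (c0 k). Proof. by []. Qed.
Let c1P : forall k, c1 k.+1 != linv (c1 k). Proof. by []. Qed.
Let CNT : CNprop setT.
Proof.
split; first by move=> xi [].
exists (exist _ c0 c0P), (exist _ c1 c1P); split=> // E.
by have := f_equal (fun z : bdry => sval z 0%N) E.
Qed.
Definition CNtop : CN := exist _ setT CNT.

HB.instance Definition _ := gen_eqMixin CN.
HB.instance Definition _ := gen_choiceMixin CN.
HB.instance Definition _ := isPointed.Build CN CNtop.

(* Vietoris topology on C_N, given by its usual subbase:
   {S | S `<=` U} and {S | S meets U}, for U open in dX. *)
Definition vietoris_sub (p : set bdry * bool) : set CN :=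
  if p.2 then [set S | sval S `<=` p.1] else [set S | sval S `&` p.1 !=set0].
HB.instance Definition _ := @isSubBaseTopological.Build CN
  (set bdry * bool)%type [set p | bopen p.1] vietoris_sub.

Definition CNm := g_sigma_algebraType (@open CN).

(* The geodesic from xi to eta (xi <> eta) consists of the prefixes of length m of
   xi and of eta, for m >= the length of the longest common prefix. *)
Definition on_geod (xi eta : nat -> letter) (v : seq letter) : Prop :=
  exists m, (v = mkseq xi m \/ v = mkseq eta m) /\
            exists i, (i <= m)%N /\ xi i != eta i.
Definition Conv (S : set bdry) : set vertex :=
  [set v | exists xi eta, [/\ S xi, S eta, xi <> eta & on_geod (sval xi) (sval eta) (val v)]].

Definition RR (T : set vertex) : set (CNm * CNm) :=
  [set p | Conv (sval p.1) `&` Conv (sval p.2) = T].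

Definition ctranslate (g : vertex) (A : set CN) : set CN :=
  [set S | exists S', A S' /\
     sval S = [set xi : bdry | exists eta, sval S' eta /\ sval xi = actb (val g) (sval eta)]].

Section Currents.
Variable R : realType.
Local Open Scope ring_scope.
Local Open Scope ereal_scope.

Definition SCurr (mu : {measure set CNm -> \bar R}) : Prop :=
  (forall (g : vertex) (A : set CNm), measurable A -> mu (ctranslate g A) = mu A) /\
  (forall K : set CN, compact K -> mu K < +oo).

Definition Cc (f : CN -> R) : Prop :=
  continuous f /\ exists K : set CN, compact K /\ forall S, ~ K S -> f S = 0%R.

End Currents.
End FreeGroup.

From HB Require Import structures.
From mathcomp Require Import all_boot all_order all_algebra.
From mathcomp Require Import all_classical all_reals all_analysis.
From mathcomp Require Import measurable_realfun ring.
Import Order.TTheory GRing.Theory Num.Theory.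
Import numFieldNormedType.Exports.

(* If a closed set S of boundary points has two points leaving the vertex 1 along
   different edges (equivalently 1 lies in Conv S), then a vertex v lies in Conv S
   exactly when S meets the cylinder of rays through v.  As Conv S1 `&` Conv S2 is
   prefix closed, whether it equals a finite subtree T containing 1 is decided by
   which cylinders S1 and S2 meet at the vertices of T and at their children.  Hence
   R(T) is a finite disjoint union of rectangles A_p * A_q whose sides, the pattern
   sets A_p, are clopen and compact in C_N, and
     (mu \x nu) R(T) = \sum_p mu(A_p) * \sum_(q compatible with p) nu(A_q).
   This is finite, bilinear and continuous in the finitely many numbers
   mu(A_p) = \int 1_(A_p) d mu, which gives (3).  For (2), g maps Conv S onto
   g Conv S, so R(gT) is the union of the translated rectangles, whose measures do
   not change since currents are invariant. *)

Set Implicit Arguments. Unset Strict Implicit. Unset Printing Implicit Defensive.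
Local Open Scope classical_set_scope.

Lemma sval_inj (T : Type) (P : T -> Prop) : injective (@sval T P).
Proof. by move=> [a pa] [b pb] /= ab; exact: eq_exist. Qed.

Lemma take_mkseq (T : Type) (f : nat -> T) k m :
  (k <= m)%N -> take k (mkseq f m) = mkseq f k.
Proof. by move=> km; rewrite /mkseq -map_take take_iota (minn_idPl km). Qed.

Lemma eq_in_mkseq (T : Type) (f g : nat -> T) m :
  (forall i, (i < m)%N -> f i = g i) -> mkseq f m = mkseq g m.
Proof. by move=> fg; apply/eq_in_map => i; rewrite mem_iota add0n => /andP[_ /fg]. Qed.

Lemma mkseq_cons (T : Type) (f : nat -> T) m :
  mkseq f m.+1 = f 0%N :: mkseq (fun k => f k.+1) m.
Proof.
rewrite /mkseq /=; congr cons; rewrite -[1%N]/(1 + 0)%N iotaDl -map_comp.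
by apply: eq_map => k /=; rewrite add1n.
Qed.

Lemma mkseq_neq (T : eqType) (f g : nat -> T) m :
  mkseq f m != mkseq g m -> exists2 i, (i < m)%N & f i != g i.
Proof.
move=> fg; apply: contrapT => nfg; apply: (negP fg); apply/eqP/eq_in_mkseq => i im.
by apply/eqP/negPn/negP => ne; apply: nfg; exists i.
Qed.

Lemma open_fin_bigcap (X : topologicalType) (I : finType) (B : I -> set X) :
  (forall i, open (B i)) -> open (\bigcap_i B i).
Proof.
move=> oB; have -> : \bigcap_i B i = \bigcap_(i in [set` enum I]) B i.
  by apply: eq_bigcapl; split=> i //=; rewrite mem_enum.
by rewrite bigcap_seq; elim/big_ind: _ => //; [exact: openT|exact: openI].
Qed.

Lemma ultra_setU (T : Type) (F : set_system T) (A B : set T) :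
  UltraFilter F -> F (A `|` B) -> F A \/ F B.
Proof.
move=> UF FAB; case: (in_ultra_setVsetC A UF) => [|FnA]; [by left|right].
by apply: filterS (filterI FAB FnA) => x [[]].
Qed.

Lemma ultra_fin_bigcup (T : Type) (F : set_system T) (I : finType) (D : set I)
    (A : I -> set T) :
  UltraFilter F -> F (\bigcup_(i in D) A i) -> exists2 i, D i & F (A i).
Proof.
move=> UF; have -> : \bigcup_(i in D) A i =
    \big[setU/set0]_(i <- enum I | `[< D i >]) A i.
  rewrite -bigcup_seq_cond; apply: eq_bigcupl; split=> i /=; rewrite mem_enum /=.
    by move=> Di; apply/asboolP.
  by move/asboolP.
elim: (enum I) => [|i s IH]; first by rewrite big_nil => /filter_not_empty.
rewrite big_cons; case: asboolP => [Di|_ /IH//].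
by case/(ultra_setU UF) => [|/IH]; [exists i|].
Qed.

Section ConvexHull.
Variable n : nat.
Local Notation letter := (letter n).
Local Notation bdry := (bdry n).
Local Notation CN := (CN n).
Local Notation vertex := (vertex n).

Definition cyl (w : seq letter) : set bdry := [set xi | mkseq (sval xi) (size w) = w].

Definition meets (U : set bdry) : set CN := [set S | sval S `&` U !=set0].

(* Equivalently, [vone n] lies in [Conv S]. *)
Definition root_split : set CN :=
  [set S | exists xi eta, [/\ sval S xi, sval S eta & sval xi 0%N != sval eta 0%N]].

Lemma meets_cyl_take (w : seq letter) k S : meets (cyl w) S -> meets (cyl (take k w)) S.
Proof.
move=> [xi [Sxi wxi]]; exists xi; split=> //; rewrite /cyl /= -{2}wxi size_take.
case: ltnP => kw; first by rewrite take_mkseq // ltnW.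
by rewrite take_oversize // size_mkseq.
Qed.

Lemma Conv_meetsE (S : CN) (v : vertex) :
  root_split S -> Conv (sval S) v <-> meets (cyl (val v)) S.
Proof.
move=> [z1 [z2 [Sz1 Sz2 z12]]]; split.
  move=> [xi [eta [Sxi Seta _ [m [[->|->] _]]]]].
    by exists xi; split=> //; rewrite /cyl /= size_mkseq.
  by exists eta; split=> //; rewrite /cyl /= size_mkseq.
move=> [xi [Sxi vxi]].
have [eta Seta xe0] : exists2 eta, sval S eta & sval xi 0%N != sval eta 0%N.
  case: (eqVneq (sval xi 0%N) (sval z1 0%N)) => [x1|]; last by exists z1.
  by exists z2; rewrite // x1.
exists xi, eta; split=> //; first by move=> xe; rewrite xe eqxx in xe0.
by exists (size (val v)); split; [left; rewrite vxi|exists 0%N].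
Qed.

Lemma root_split_Conv_vone (S : CN) : Conv (sval S) (vone n) -> root_split S.
Proof.
move=> [xi [eta [Sxi Seta _ [m [m1 [i [im xe]]]]]]].
have m0 : m = 0%N by case: m1 => /(f_equal size); rewrite size_mkseq.
by move: im; rewrite m0 leqn0 => /eqP i0; subst i; exists xi, eta.
Qed.

Lemma RRE (T : set vertex) (X : CNm n * CNm n) : T (vone n) ->
  RR T X <-> [/\ root_split X.1, root_split X.2 &
     forall v, T v <-> meets (cyl (val v)) X.1 /\ meets (cyl (val v)) X.2].
Proof.
move=> T1; split=> [RX|[r1 r2 TE]].
  have [/root_split_Conv_vone r1 /root_split_Conv_vone r2] :
      (Conv (sval X.1) `&` Conv (sval X.2)) (vone n) by rewrite RX.
  split=> // v; rewrite -RX.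
  by split=> [[/(Conv_meetsE _ r1) ? /(Conv_meetsE _ r2)]|[? ?]]; split=> //;
     apply/Conv_meetsE.
rewrite /RR; apply/seteqP; split=> v /=.
  by move=> [/(Conv_meetsE _ r1) ? /(Conv_meetsE _ r2) ?]; apply/TE.
by move=> /TE[? ?]; split; apply/Conv_meetsE.
Qed.

End ConvexHull.

Section Patterns.
Variable n : nat.
Local Notation letter := (letter n).
Local Notation CN := (CN n).
Local Notation vertex := (vertex n).
Local Notation root_split := (@root_split n).

Definition vparent (v : vertex) : vertex :=
  exist _ (take (size (val v)).-1 (val v)) (take_sorted _ (valP v)).

Definition vchildren (v : vertex) : seq vertex :=
  pmap (fun x : letter => insub (rcons (val v) x)) (enum [set: 'I_n.+2 * bool]).

Definition with_children (T : set vertex) : seq vertex :=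
  flatten [seq v :: vchildren v | v <- finmap.enum_fset (fset_set T)].

Lemma size0_vone (v : vertex) : size (val v) = 0%N -> v = vone n.
Proof. by move=> /size0nil v0; apply/val_inj; rewrite v0. Qed.

Lemma mem_with_children (T : set vertex) v : finite_set T -> T v -> v \in with_children T.
Proof.
move=> fT Tv; apply/flattenP; exists (v :: vchildren v); last by rewrite inE eqxx.
by apply/mapP; exists v => //; rewrite in_fset_set // inE.
Qed.

Lemma with_children_parent (T : set vertex) v :
  finite_set T -> T (vparent v) -> v \in with_children T.
Proof.
move=> fT Tpv; have [v0|vn0] := eqVneq (size (val v)) 0%N.
  suff <- : vparent v = v by exact: mem_with_children.
  by apply/val_inj; rewrite /= v0 take0 (size0nil v0).
apply/flattenP; exists (vparent v :: vchildren (vparent v)).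
  by apply/mapP; exists (vparent v) => //; rewrite in_fset_set // inE.
rewrite inE mem_pmap; apply/orP; right; apply/mapP.
case: v vn0 {Tpv} => w rw /= wn0; exists (last (ord0, true) w).
  by rewrite mem_enum in_setT.
have -> : rcons (take (size w).-1 w) (last (ord0, true) w) = w.
  case/lastP: w rw wn0 => [|w' x] //= _ _.
  by rewrite size_rcons /= last_rcons -!cats1 take_size_cat.
by case: insubP => [u _ uw|/negP//]; congr Some; apply/val_inj; rewrite /= uw.
Qed.

Lemma prefix_closed_eq (T D : set vertex) : finite_set T -> T (vone n) ->
  (forall v, D v -> D (vparent v)) ->
  (forall v, v \in with_children T -> T v <-> D v) -> forall v, T v <-> D v.
Proof.
move=> fT T1 Dp TD v; split=> [Tv|]; first by apply/TD => //; exact: mem_with_children.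
elim: {v}(size (val v)) {-2}v (erefl (size (val v))) => [|k IH] v vk Dv.
  by rewrite (size0_vone vk).
apply/TD => //; apply: with_children_parent => //; apply: IH (Dp _ Dv).
by rewrite /= size_take vk ltnSn.
Qed.

Variable T : set vertex.

Definition npat := size (with_children T).
Definition pat_vertex (i : 'I_npat) : vertex := nth (vone n) (with_children T) i.

Definition pattern (S : CN) : {ffun 'I_npat -> bool} :=
  [ffun i => `[< meets (cyl (val (pat_vertex i))) S >]].

Definition pattern_set (p : {ffun 'I_npat -> bool}) : set CN :=
  [set S | root_split S /\ pattern S = p].

Definition compatible (p q : {ffun 'I_npat -> bool}) : bool :=
  [forall i, (p i && q i) == `[< T (pat_vertex i) >]].

Lemma pattern_set_disj p q S : pattern_set p S -> pattern_set q S -> p = q.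
Proof. by move=> [_ <-] [_ <-]. Qed.

Lemma RR_patternE : finite_set T -> T (vone n) ->
  RR T = [set X | exists p q, [/\ compatible p q, pattern_set p X.1 & pattern_set q X.2]].
Proof.
move=> fT T1; apply/seteqP; split=> X.
  move=> /(RRE _ T1) [r1 r2 TE]; exists (pattern X.1), (pattern X.2); split=> //.
  apply/forallP => i; rewrite !ffunE -asbool_and; apply/eqP; congr asbool.
  by apply/propext; split=> /TE.
move=> [p [q [pq [r1 p1] [r2 q2]]]]; apply/(RRE _ T1); split=> //.
apply: prefix_closed_eq => //.
  by move=> v [? ?]; split; apply: meets_cyl_take.
move=> v /(nthP (vone n)) [i ilt <-].
move/forallP: pq => /(_ (Ordinal ilt)); rewrite -p1 -q2 !ffunE -asbool_and => /eqP e.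
by split=> [Tv|m12]; apply/asboolP; [rewrite e|rewrite -e]; apply/asboolP.
Qed.

End Patterns.

Section Topology.
Variable n : nat.
Local Notation letter := (letter n).
Local Notation bdry := (bdry n).
Local Notation CN := (CN n).
Local Notation vertex := (vertex n).
Local Notation bopen := (@bopen n).
Local Notation root_split := (@root_split n).

Lemma bopen_cyl (w : seq letter) : bopen (cyl w).
Proof. by move=> xi wxi; exists (size w) => eta xe; rewrite /cyl /= -[RHS]wxi; apply: eq_in_mkseq. Qed.

Lemma bopen_cylC (w : seq letter) : bopen (~` cyl w).
Proof.
move=> xi nwxi; exists (size w) => eta xe weta; apply: nwxi.
by rewrite /cyl /= -[RHS]weta; apply: eq_in_mkseq => i /xe ->.
Qed.

Lemma open_vietoris_sub (p : set bdry * bool) : bopen p.1 -> @open CN (vietoris_sub p).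
Proof.
move=> p1; exists [set vietoris_sub p]; last by rewrite bigcup_set1.
by move=> _ ->; exact: finI_from1.
Qed.

Lemma open_meets U : bopen U -> open (meets U).
Proof. exact: (@open_vietoris_sub (U, false)). Qed.

Lemma open_subset U : bopen U -> open [set S : CN | sval S `<=` U].
Proof. exact: (@open_vietoris_sub (U, true)). Qed.

Lemma open_meets_cyl (w : seq letter) : open (meets (cyl w)).
Proof. exact/open_meets/bopen_cyl. Qed.

Lemma open_meets_cylC (w : seq letter) : open (~` meets (cyl w)).
Proof.
have -> : ~` meets (cyl w) = [set S | sval S `<=` ~` cyl w].
  by apply/seteqP; split=> S /= => [nSw xi Sxi wxi|Sw [xi [/Sw]]]; [apply: nSw; exists xi|].
exact/open_subset/bopen_cylC.
Qed.

Lemma meets_cyl1 (a : letter) S :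
  meets (cyl [:: a]) S <-> exists2 xi, sval S xi & sval xi 0%N = a.
Proof.
split=> [[xi [Sxi [xa]]]|[xi Sxi xa]]; exists xi => //.
by split=> //; rewrite /cyl /mkseq /= xa.
Qed.

Lemma root_splitE : root_split = \bigcup_(ab in [set ab : letter * letter | ab.1 != ab.2])
                                   (meets (cyl [:: ab.1]) `&` meets (cyl [:: ab.2])).
Proof.
apply/seteqP; split=> S.
  move=> [xi [eta [Sxi Seta xe]]]; exists (sval xi 0%N, sval eta 0%N) => //.
  by split; apply/meets_cyl1; [exists xi|exists eta].
move=> [[a b] /= ab [/meets_cyl1 [xi Sxi xa] /meets_cyl1 [eta Seta eb]]].
by exists xi, eta; rewrite xa eb.
Qed.

Lemma open_root_split : open root_split.
Proof. by rewrite root_splitE; apply: bigcup_open => ab _; apply: openI; exact: open_meets_cyl. Qed.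

Lemma CN_point (S : CN) : exists xi, sval S xi.
Proof. by case: (svalP S) => _ [xi [eta [Sxi _ _]]]; exists xi. Qed.

Lemma closed_root_split : closed root_split.
Proof.
rewrite -[root_split]setCK closedC.
have -> : ~` root_split = \bigcup_(a : letter) [set S : CN | sval S `<=` cyl [:: a]].
  apply/seteqP; split=> S /=.
    move=> nS; have [xi Sxi] := CN_point S; exists (sval xi 0%N) => // eta Seta.
    rewrite /cyl /mkseq /=; congr [:: _]; apply/eqP/negPn/negP => ex.
    by apply: nS; exists eta, xi.
  move=> [a _ Sa] [xi [eta [/Sa [xa] /Sa [ea]]]].
  by rewrite xa ea eqxx.
by apply: bigcup_open => a _; apply/open_subset/bopen_cyl.
Qed.

Definition meets_cyl_eq (b : bool) (w : seq letter) : set CN :=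
  [set S | `[< meets (cyl w) S >] = b].

Lemma meets_cyl_eqC b (w : seq letter) : ~` meets_cyl_eq b w = meets_cyl_eq (~~ b) w.
Proof. by apply/seteqP; split=> S; rewrite /meets_cyl_eq /=; case: b; case: (`[< _ >]). Qed.

Lemma open_meets_cyl_eq b (w : seq letter) : open (meets_cyl_eq b w).
Proof.
have -> : meets_cyl_eq b w = if b then meets (cyl w) else ~` meets (cyl w).
  apply/seteqP; split=> S; rewrite /meets_cyl_eq /=;
  by case: (pselect (meets (cyl w) S)) => m; rewrite ?(asboolT m) ?(asboolF m); case: b.
by case: b; [exact: open_meets_cyl|exact: open_meets_cylC].
Qed.

Lemma closed_meets_cyl_eq b (w : seq letter) : closed (meets_cyl_eq b w).
Proof. by rewrite -[meets_cyl_eq b w]setCK closedC meets_cyl_eqC; exact: open_meets_cyl_eq. Qed.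

Lemma continuous_vietoris (f : CN -> CN) :
  (forall p : set bdry * bool, bopen p.1 -> open (f @^-1` vietoris_sub p)) -> continuous f.
Proof.
move=> fp; apply/continuousP => A oA; rewrite openE => S AfS.
have [_ [[D sD <-] [B DB BfS] BA]] : nbhs (f S) A by apply: open_nbhs_nbhs.
rewrite /interior; apply: filterS (_ : nbhs S (f @^-1` B)) => [S' ?|].
  by apply: BA; exists B.
move: BfS; have [E sE <-] := sD _ DB; move=> BfS.
apply: filter_bigI => p Ep; apply: open_nbhs_nbhs; split; last exact: BfS.
by apply: fp; have := sE _ Ep; rewrite inE.
Qed.

Variable T : set vertex.
Local Notation pattern_set := (@pattern_set n T).

Lemma pattern_setE p :
  pattern_set p = root_split `&` \bigcap_i meets_cyl_eq (p i) (val (@pat_vertex n T i)).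
Proof.
apply/seteqP; split=> S [rS pS]; split=> //.
  by move=> i _; rewrite /meets_cyl_eq /= -pS ffunE.
by apply/ffunP => i; rewrite ffunE; apply: pS.
Qed.

Lemma open_pattern_set p : open (pattern_set p).
Proof.
rewrite pattern_setE; apply: openI; first exact: open_root_split.
by apply: open_fin_bigcap => i; exact: open_meets_cyl_eq.
Qed.

Lemma closed_pattern_set p : closed (pattern_set p).
Proof.
rewrite pattern_setE; apply: closedI; first exact: closed_root_split.
by apply: closed_bigI => i _; exact: closed_meets_cyl_eq.
Qed.

End Topology.

Section Compactness.
Variable n : nat.
Local Notation letter := (letter n).
Local Notation bdry := (bdry n).
Local Notation CN := (CN n).
Local Notation vertex := (vertex n).
Local Notation bopen := (@bopen n).
Local Notation root_split := (@root_split n).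

Lemma bopen_cyl_sub (U : set bdry) xi :
  bopen U -> U xi -> exists m, cyl (mkseq (sval xi) m) `<=` U.
Proof.
move=> oU /oU [m Um]; exists m => eta; rewrite /cyl size_mkseq => /= etam.
apply: Um => i im; have := congr1 (nth (ord0, true) ^~ i) etam.
by rewrite !nth_mkseq.
Qed.

Section UltraBranch.
Variables (F : set_system CN) (C : set bdry).
Hypothesis UF : UltraFilter F.

Lemma ultra_meets_rcons (w : seq letter) : F (meets (cyl w `&` C)) ->
  exists x : letter, F (meets (cyl (rcons w x) `&` C)).
Proof.
move=> Fw; suff [x _ Fx] : exists2 x : letter, [set: letter] x &
    F (meets (cyl (rcons w x) `&` C)) by exists x.
apply: (ultra_fin_bigcup UF); apply: filterS Fw => S [xi [Sxi [wxi Cxi]]].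
exists (sval xi (size w)) => //; exists xi; split=> //; split=> //.
by rewrite /cyl /= size_rcons mkseqS wxi.
Qed.

Variable w0 : seq letter.
Hypothesis Fw0 : F (meets (cyl w0 `&` C)).

Let next_letter (w : seq letter) : letter :=
  odflt (ord0, true) [pick x : 'I_n.+2 * bool | `[< F (meets (cyl (rcons w x) `&` C)) >]].

Fixpoint branch_word k :=
  if k is k'.+1 then rcons (branch_word k') (next_letter (branch_word k')) else w0.

Lemma ultra_meets_branch_word k : F (meets (cyl (branch_word k) `&` C)).
Proof.
elim: k => [|k IH] //=; rewrite /next_letter.
case: pickP => [x /asboolP //|none].
have [x Fx] := ultra_meets_rcons IH.
by have := none x; rewrite (asboolT Fx).
Qed.

Lemma size_branch_word k : size (branch_word k) = (size w0 + k)%N.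
Proof. by elim: k => [|k IH] /=; rewrite ?addn0 // size_rcons IH addnS. Qed.

Lemma take_branch_word k k' :
  (k <= k')%N -> take (size (branch_word k)) (branch_word k') = branch_word k.
Proof.
move=> /subnK <-; elim: (k' - k)%N => [|j IH]; first by rewrite add0n take_size.
rewrite addSn /= -cats1 takel_cat ?IH //.
by rewrite !size_branch_word leq_add2l leq_addl.
Qed.

Let branch_fun (i : nat) : letter := nth (ord0, true) (branch_word i.+1) i.

Lemma nth_branch_word k i :
  (i < size (branch_word k))%N -> branch_fun i = nth (ord0, true) (branch_word k) i.
Proof.
move=> ik; rewrite /branch_fun; have [ki|ik'] := leqP k i.+1.
  by rewrite -(take_branch_word ki) nth_take.
rewrite -(take_branch_word (ltnW ik')) nth_take //.
by rewrite size_branch_word addnS ltnS leq_addl.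
Qed.

Lemma mkseq_branch_fun k : mkseq branch_fun (size (branch_word k)) = branch_word k.
Proof.
by rewrite -[RHS](mkseq_nth (ord0, true)); apply: eq_in_mkseq => i; exact: nth_branch_word.
Qed.

Lemma branch_fun_reduced k : branch_fun k.+1 != linv (branch_fun k).
Proof.
have /filter_ex [S [eta [_ [etak _]]]] := ultra_meets_branch_word k.+2.
have kk : (k.+1 < size (branch_word k.+2))%N.
  by rewrite size_branch_word !addnS !ltnS leq_addl.
rewrite (nth_branch_word kk) (nth_branch_word (ltnW kk)) -etak !nth_mkseq //.
  exact: (svalP eta).
exact: ltnW.
Qed.

Lemma ultra_branch : exists2 xi : bdry, mkseq (sval xi) (size w0) = w0 &
  forall k, F (meets (cyl (mkseq (sval xi) k) `&` C)).
Proof.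
exists (exist _ branch_fun branch_fun_reduced); first exact: (mkseq_branch_fun 0).
move=> k; apply: filterS (ultra_meets_branch_word k) => S [eta [Seta [etak Ceta]]].
exists eta; split=> //; split=> //.
have kk : (k <= size (branch_word k))%N by rewrite size_branch_word leq_addl.
rewrite /cyl /= size_mkseq -(take_mkseq _ kk) etak.
by rewrite -{1}(mkseq_branch_fun k) take_mkseq.
Qed.

End UltraBranch.

Definition ultra_limit (F : set_system CN) : set bdry :=
  [set xi | forall k, F (meets (cyl (mkseq (sval xi) k)))].

Lemma bclosed_ultra_limit F : bclosed (ultra_limit F).
Proof.
move=> xi /existsNP [k nFk]; exists k => eta xe Leta; apply: nFk.
by rewrite (_ : mkseq _ k = mkseq (sval eta) k) //; apply: eq_in_mkseq => i /xe.
Qed.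

Lemma ultra_limit_meets F U : Filter F ->
  bopen U -> ultra_limit F `&` U !=set0 -> F (meets U).
Proof.
move=> FF oU [xi [Lxi Uxi]]; have [m mU] := bopen_cyl_sub oU Uxi.
by apply: filterS (Lxi m) => S [eta [Seta /mU Ueta]]; exists eta.
Qed.

Lemma ultra_limit_sub F U : UltraFilter F ->
  bopen U -> ultra_limit F `<=` U -> F [set S : CN | sval S `<=` U].
Proof.
move=> UF oU LU; case: (in_ultra_setVsetC [set S : CN | sval S `<=` U] UF) => // FnU.
have /(ultra_branch UF) [xi _ FxiU] : F (meets (cyl [::] `&` ~` U)).
  apply: filterS FnU => S /= nSU; apply: contrapT => nmeet; apply: nSU => xi Sxi.
  by apply: contrapT => nUxi; apply: nmeet; exists xi.
have Lxi : ultra_limit F xi.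
  by move=> k; apply: filterS (FxiU k) => S [eta [Seta [? _]]]; exists eta.
have [m mU] := bopen_cyl_sub oU (LU _ Lxi).
by have /filter_ex [S [eta [_ [/mU]]]] := FxiU m.
Qed.

Lemma compact_root_split : compact root_split.
Proof.
rewrite compact_ultra => F UF Fr.
have [[a b] /= ab [Fa Fb]] : exists2 ab : letter * letter, ab.1 != ab.2 &
    F (meets (cyl [:: ab.1])) /\ F (meets (cyl [:: ab.2])).
  rewrite root_splitE in Fr; have [ab ab12 Fab] := ultra_fin_bigcup UF Fr.
  by exists ab => //; split; apply: filterS Fab => S [].
have limit_branch (x : letter) : F (meets (cyl [:: x])) ->
    exists2 xi, ultra_limit F xi & sval xi 0%N = x.
  rewrite -[cyl _]setIT => /(ultra_branch UF) [xi x0 Fxi]; exists xi.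
    by move=> k; rewrite -[cyl _]setIT.
  by move: x0; rewrite /mkseq /= => -[].
have [xa La xa0] := limit_branch _ Fa; have [xb Lb xb0] := limit_branch _ Fb.
have xab : xa <> xb by move=> e; move: ab; rewrite -xa0 -xb0 e eqxx.
pose L : CN := exist _ (ultra_limit F)
  (conj (@bclosed_ultra_limit F) (ex_intro _ xa (ex_intro _ xb (And3 La Lb xab)))).
exists L; split; first by exists xa, xb; rewrite xa0 xb0.
move=> A [_ [[D sD <-] [B DB BL] BA]].
suff FB : F B by apply: filterS FB => S BS; apply: BA; exists B.
move: BL; have [E sE <-] := sD _ DB => BL.
apply: filter_bigI => -[U c] Ep; have := sE _ Ep; rewrite inE /= => oU.
by move: (BL _ Ep); case: (c) => /=; [exact: ultra_limit_sub|exact: ultra_limit_meets].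
Qed.

Lemma compact_pattern_set (T : set vertex) p : compact (@pattern_set n T p).
Proof.
apply: (subclosed_compact (@closed_pattern_set n T p) compact_root_split).
by move=> S [].
Qed.

End Compactness.

Section FiniteRectangles.
Local Open Scope ring_scope.
Local Open Scope ereal_scope.
Context d (X : measurableType d) (R : realType) (P : finType).
Variables (A B : P -> set X) (compat : P -> P -> bool).
Hypotheses (mA : forall p, measurable (A p)) (mB : forall q, measurable (B q)).
Hypotheses (dA : forall p p' x, A p x -> A p' x -> p = p').
Hypotheses (dB : forall q q' y, B q y -> B q' y -> q = q').

Let rects := [set z : X * X | exists p q, [/\ compat p q, A p z.1 & B q z.2]].

Lemma measure_xsection_rects (nu : {measure set X -> \bar R}) x :
  nu (xsection rects x) = \sum_p (\sum_(q | compat p q) nu (B q)) * (\1_(A p) x)%:E.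
Proof.
have [[p0 Ap0x]|nAx] := pselect (exists p, A p x); last first.
  rewrite big1 => [|p _]; last by rewrite indicE memNset ?mule0 // => Apx; apply: nAx; exists p.
  rewrite (_ : xsection _ x = set0) ?measure0 //; apply/seteqP; split=> y //.
  by rewrite /xsection /= inE => -[p [q [_ Apx _]]]; apply: nAx; exists p.
rewrite (bigD1 p0) //= indicE mem_set // mule1 [X in _ + X]big1 ?adde0 => [|p pp0]; last first.
  by rewrite indicE memNset ?mule0 // => /dA/(_ Ap0x) pp0'; rewrite pp0' eqxx in pp0.
have -> : xsection rects x = \bigcup_(q in [set` compat p0]) B q.
  apply/seteqP; split=> y; rewrite /xsection /= inE.
    by move=> [p [q [pq Apx Bqy]]]; exists q; rewrite // -(dA Apx Ap0x).
  by move=> [q pq Bqy]; exists p0, q.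
rewrite measure_fin_bigcup; [|exact: finite_finset| |by move=> q _; exact: mB]; last first.
  by move=> q q' _ _ [y [Bqy Bq'y]]; exact: dB Bqy Bq'y.
rewrite -(@bigfs _ _ _ _ (enum P) (compat p0)) ?enum_uniq // => [|q _]; last by rewrite mem_enum.
by rewrite big_enum_cond.
Qed.

Lemma product_measure_rects (mu nu : {measure set X -> \bar R}) :
  (mu \x nu) rects = \sum_p mu (A p) * \sum_(q | compat p q) nu (B q).
Proof.
have indic_ge0 p x : 0 <= (\1_(A p) x : R)%:E by rewrite lee_fin indicE; case: (_ \in _).
have sum_ge0 p : 0 <= \sum_(q | compat p q) nu (B q) by apply: sume_ge0 => q _.
have m_indic p : measurable_fun [set: X] (fun x : X => (\1_(A p) x : R)%:E).
  exact/measurable_EFinP/measurable_indic.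
rewrite /product_measure1 /=.
under eq_integral => x _ do rewrite measure_xsection_rects.
rewrite ge0_integral_sum // => [|p|p x _]; last 2 first.
- exact: measurable_funeM.
- exact: mule_ge0.
apply: eq_bigr => p _.
by rewrite ge0_integralZl // integral_indic // setIT muleC.
Qed.

End FiniteRectangles.

Section CompatibilityForm.
Local Open Scope ring_scope.
Variables (R : realType) (P : finType) (compat : P -> P -> bool).

(* [(mu \x nu) R(T)] as a function of the masses of the pattern sets. *)
Definition compat_form (x y : P -> R) : R := \sum_p x p * \sum_(q | compat p q) y q.

Lemma compat_form_linearl x1 x2 y a b :
  compat_form (fun p => a * x1 p + b * x2 p) y = a * compat_form x1 y + b * compat_form x2 y.
Proof.
rewrite /compat_form !mulr_sumr -big_split; apply: eq_bigr => p _.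
by rewrite mulrDl !mulrA.
Qed.

Lemma compat_form_linearr x y1 y2 a b :
  compat_form x (fun q => a * y1 q + b * y2 q) = a * compat_form x y1 + b * compat_form x y2.
Proof.
rewrite /compat_form !mulr_sumr -big_split; apply: eq_bigr => p _.
rewrite big_split /= -!mulr_sumr mulrDr.
by rewrite !mulrA (mulrC (x p) a) (mulrC (x p) b).
Qed.

Lemma compat_form_continuous x y (e : R) : 0 < e -> exists2 d : R, 0 < d &
  forall x' y', (forall p, `|x' p - x p| < d /\ `|y' p - y p| < d) ->
  `|compat_form x' y' - compat_form x y| < e.
Proof.
move=> e0.
pose K := \sum_p \sum_(q | compat p q) (`|y q| + 1 + `|x p|).
have K0 : 0 <= K by apply: sumr_ge0 => p _; apply: sumr_ge0 => q _; rewrite addr_ge0.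
have K1 : 0 < K + 1 by rewrite ltr_wpDl.
pose d := Num.min 1 (e / (K + 1)).
exists d => [|x' y' xy']; first by rewrite lt_min ltr01 divr_gt0.
have d1 : d <= 1 by rewrite ge_min lexx.
have de : d <= e / (K + 1) by rewrite ge_min lexx orbT.
have -> : compat_form x' y' - compat_form x y =
    \sum_p \sum_(q | compat p q) (x' p * y' q - x p * y q).
  by rewrite /compat_form -sumrB; apply: eq_bigr => p _; rewrite !mulr_sumr -sumrB.
apply: (le_lt_trans (ler_norm_sum _ _ _)); apply: (@le_lt_trans _ _ (d * K)).
  rewrite /K mulr_sumr; apply: ler_sum => p _.
  apply: (le_trans (ler_norm_sum _ _ _)); rewrite mulr_sumr; apply: ler_sum => q _.
  have [xp _] := xy' p; have [_ yq] := xy' q.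
  have y'q : `|y' q| <= `|y q| + 1.
    rewrite -[y' q](subrK (y q)) addrC; apply: (le_trans (ler_normD _ _)).
    by rewrite lerD2l; apply: le_trans (ltW yq) d1.
  have -> : x' p * y' q - x p * y q = (x' p - x p) * y' q + x p * (y' q - y q) by ring.
  apply: (le_trans (ler_normD _ _)); rewrite !normrM mulrDr [d * `|x p|]mulrC.
  apply: lerD; first by apply: ler_pM => //; exact: ltW.
  exact/ler_wpM2l/ltW.
apply: (@le_lt_trans _ _ (e / (K + 1) * K)); first exact: ler_wpM2r.
by rewrite mulrAC ltr_pdivrMr // ltr_pM2l // ltrDl ltr01.
Qed.

End CompatibilityForm.

Section BoundaryAction.
Variable n : nat.
Local Notation letter := (letter n).
Local Notation bdry := (bdry n).
Local Notation CN := (CN n).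
Local Notation linv := (@linv n).

Definition ray_reduced (f : nat -> letter) := forall k, f k.+1 != linv (f k).

Lemma linvK : involutive linv.
Proof. by case=> a b; rewrite /linv /= negbK. Qed.

Lemma pushb_reduced x f : ray_reduced f -> ray_reduced (pushb x f).
Proof. by move=> rf k; rewrite /pushb; case: ifP => // f0; case: k => [|k] //=; rewrite f0. Qed.

Lemma pushb_cancel x f : f 0%N == linv x -> pushb x f = (fun k => f k.+1).
Proof. by rewrite /pushb => ->. Qed.

Lemma pushb_extend x f : f 0%N != linv x ->
  pushb x f = (fun k => if k is k'.+1 then f k' else x).
Proof. by rewrite /pushb => /negbTE ->. Qed.

Lemma pushbK x f : ray_reduced f -> pushb (linv x) (pushb x f) = f.
Proof.
move=> rf; have [f0|f0] := eqVneq (f 0%N) (linv x).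
  rewrite (pushb_cancel (introT eqP f0)) pushb_extend; last first.
    by have := rf 0%N; rewrite f0 !linvK.
  by apply: funext => -[|k] //=; rewrite f0.
by rewrite (pushb_extend f0) pushb_cancel //= linvK.
Qed.

Definition winv (g : seq letter) := rev (map linv g).

Lemma winvK : involutive winv.
Proof.
move=> g; rewrite /winv map_rev revK -map_comp map_id_in // => x _ /=.
exact: linvK.
Qed.

Lemma winv_cons x g : winv (x :: g) = winv g ++ [:: linv x].
Proof. by rewrite /winv /= rev_cons cats1. Qed.

Lemma actb_cat (a b : seq letter) f : actb (a ++ b) f = actb a (actb b f).
Proof. by rewrite /actb foldr_cat. Qed.

Lemma actb_reduced g f : ray_reduced f -> ray_reduced (actb g f).
Proof. by elim: g => [|x g IH] //= rf; apply/pushb_reduced/IH. Qed.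

Lemma actbK g f : ray_reduced f -> actb (winv g) (actb g f) = f.
Proof.
elim: g f => [|x g IH] f rf //=.
by rewrite winv_cons actb_cat /= pushbK ?IH //; exact: actb_reduced.
Qed.

Lemma actbKV g f : ray_reduced f -> actb g (actb (winv g) f) = f.
Proof. by move=> rf; rewrite -{1}(winvK g) actbK. Qed.

Lemma actb_prefix (g : seq letter) f1 f2 m :
  (forall i, (i < m + size g)%N -> f1 i = f2 i) ->
  forall i, (i < m)%N -> actb g f1 i = actb g f2 i.
Proof.
elim: g m => [|x g IH] m f12 /=; first by move=> i im; apply: f12; rewrite addn0.
have {}IH : forall i, (i < m.+1)%N -> actb g f1 i = actb g f2 i.
  by apply: IH => i; rewrite addSn -addnS; apply: f12.
move=> i im; rewrite /pushb (IH 0%N) //.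
case: ifP => _; first by apply: IH; rewrite ltnS.
by case: i im => [|i] im //=; apply/IH/ltnW/ltnW.
Qed.

Definition bact (g : seq letter) (xi : bdry) : bdry :=
  exist _ (actb g (sval xi)) (actb_reduced g (svalP xi)).

Lemma bactK g : cancel (bact g) (bact (winv g)).
Proof. by move=> xi; apply: sval_inj; rewrite /= actbK //; exact: svalP. Qed.

Lemma bactKV g : cancel (bact (winv g)) (bact g).
Proof. by move=> xi; apply: sval_inj; rewrite /= actbKV //; exact: svalP. Qed.

Lemma bopen_bact_preimage g U : bopen U -> bopen (bact g @^-1` U).
Proof.
move=> oU xi /oU [m Um]; exists (m + size g)%N => eta xe; apply: Um => i im /=.
by apply: actb_prefix im => j /xe.
Qed.

Lemma bact_image g A : bact g @` A = bact (winv g) @^-1` A.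
Proof.
apply/seteqP; split=> xi; first by move=> [eta Aeta <-]; rewrite /= bactK.
by move=> /= Axi; exists (bact (winv g) xi); rewrite ?bactKV.
Qed.

Lemma bact_imageK (g : seq letter) (A : set bdry) : bact g @` (bact (winv g) @` A) = A.
Proof.
apply/seteqP; split=> xi; first by move=> [_ [eta Aeta <-] <-]; rewrite bactKV.
by move=> Axi; exists (bact (winv g) xi); [exists xi|rewrite bactKV].
Qed.

Lemma CNprop_bact_image g (S : CN) : CNprop (bact g @` sval S).
Proof.
case: (svalP S) => cS [xi [eta [Sxi Seta xe]]]; split.
  rewrite /bclosed bact_image (_ : ~` _ = bact (winv g) @^-1` (~` sval S)) //.
  exact: bopen_bact_preimage.
exists (bact g xi), (bact g eta); split; [by exists xi|by exists eta|].
by move=> /(congr1 (bact (winv g))); rewrite !bactK.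
Qed.

Definition cact g (S : CN) : CN := exist _ _ (CNprop_bact_image g S).

Lemma cactK g : cancel (cact g) (cact (winv g)).
Proof. by move=> S; apply: sval_inj; have := bact_imageK (winv g) (sval S); rewrite winvK. Qed.

Lemma cactKV g : cancel (cact (winv g)) (cact g).
Proof. by move=> S; have := cactK (winv g) S; rewrite winvK. Qed.

Lemma ctranslateE (g : vertex n) A S :
  ctranslate g A S <-> exists2 S', A S' & S = cact (val g) S'.
Proof.
have imageE (S' : CN) : [set xi | exists eta, sval S' eta /\ sval xi = actb (val g) (sval eta)]
    = bact (val g) @` sval S'.
  apply/seteqP; split=> xi /=; first by move=> [eta [S'eta xe]]; exists eta => //; exact: sval_inj.
  by move=> [eta S'eta <-]; exists eta.
split=> [[S' [AS' SE]]|[S' AS' ->]]; exists S'; rewrite ?imageE //.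
by apply: sval_inj; rewrite SE imageE.
Qed.

Lemma cact_vietoris_sub g (p : set bdry * bool) :
  cact g @^-1` vietoris_sub p = vietoris_sub (bact g @^-1` p.1, p.2).
Proof.
case: p => U [|]; apply/seteqP; split=> S /=.
- by move=> SU xi Sxi; apply: SU; exists xi.
- by move=> SU _ [xi Sxi <-]; apply: SU.
- by move=> [_ [[xi Sxi <-] Uxi]]; exists xi.
- by move=> [xi [Sxi Uxi]]; exists (bact g xi); split=> //; exists xi.
Qed.

Lemma ctranslate_preimage (g : vertex n) (A : set CN) :
  ctranslate g A = cact (winv (val g)) @^-1` A.
Proof.
apply/seteqP; split=> S; first by move=> /ctranslateE [S' AS' ->]; rewrite /= cactK.
by move=> AS; apply/ctranslateE; exists (cact (winv (val g)) S); rewrite ?cactKV.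
Qed.

Lemma open_ctranslate (g : vertex n) (A : set CN) : open A -> open (ctranslate g A).
Proof.
rewrite ctranslate_preimage; move: A; apply/continuousP/continuous_vietoris => p p1.
by rewrite cact_vietoris_sub; apply: (@open_vietoris_sub n (_, _)); exact: bopen_bact_preimage.
Qed.

End BoundaryAction.

Section ConvEquivariance.
Variable n : nat.
Local Notation letter := (letter n).
Local Notation bdry := (bdry n).
Local Notation vertex := (vertex n).
Local Notation linv := (@linv n).

(* [Some a] if the ray [f] passes through [v] and leaves it along the letter [a],
   [None] if it does not pass through [v]. *)
Definition exit_letter (v : seq letter) (f : nat -> letter) : option letter :=
  if mkseq f (size v) == v then Some (f (size v)) else None.

Lemma on_geodE (xi eta : nat -> letter) v :
  on_geod xi eta v <-> exit_letter v xi != exit_letter v eta.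
Proof.
split.
  move=> [m [vm [i [im xe]]]].
  have exit_neq (a b : nat -> letter) : v = mkseq a m -> a i != b i ->
      exit_letter v a != exit_letter v b.
    move=> -> ab; rewrite /exit_letter size_mkseq eqxx.
    case: (eqVneq (mkseq b m) (mkseq a m)) => [ba|//].
    apply/negP => /eqP [abm]; move: ab.
    case: (ltngtP i m) im => // [lt _|-> _]; last by rewrite abm eqxx.
    by have := congr1 (nth (ord0, true) ^~ i) ba; rewrite !nth_mkseq // => ->; rewrite eqxx.
  by case: vm => vm; [|rewrite eq_sym]; apply: exit_neq; rewrite // eq_sym.
rewrite /exit_letter.
case vx: (mkseq xi (size v) == v); case ve: (mkseq eta (size v) == v) => // xe.
- exists (size v); split; first by left; rewrite (eqP vx).
  by exists (size v); split => //; apply: contra xe => /eqP ->.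
- exists (size v); split; first by left; rewrite (eqP vx).
  have /mkseq_neq [i im xie] : mkseq xi (size v) != mkseq eta (size v).
    by rewrite (eqP vx) eq_sym ve.
  by exists i; rewrite ltnW.
- exists (size v); split; first by right; rewrite (eqP ve).
  have /mkseq_neq [i im xie] : mkseq xi (size v) != mkseq eta (size v).
    by rewrite (eqP ve) vx.
  by exists i; rewrite ltnW.
Qed.

(* How the exit letter at [v] changes when the ray and the vertex are pushed by [x]. *)
Definition push_exit (x : letter) (v : seq letter) (o : option letter) : option letter :=
  match v with
  | [::] => if o is Some a then (if a == linv x then None else Some a) else None
  | a :: v' => if a == linv x then
                 (if o is Some b then Some b else (if v' is [::] then Some x else None))
               else o
  end.

Lemma reduced_cons2 (a b : letter) v : reduced [:: a, b & v] -> b != linv a.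
Proof. by rewrite /reduced /= => /andP []. Qed.

Lemma exit_letter_push x v f : reduced v -> ray_reduced f ->
  exit_letter (pushw x v) (pushb x f) = push_exit x v (exit_letter v f).
Proof.
move=> rv rf; have f1x : f 0%N == linv x -> (f 1%N == x) = false.
  by move=> /eqP f0; apply/negbTE; have := rf 0%N; rewrite f0 linvK.
case: v rv => [|a v'] rv.
  rewrite /exit_letter /=; case f0: (f 0%N == linv x).
    by rewrite (pushb_cancel f0) /mkseq /= eqseq_cons andbT f1x.
  by rewrite (pushb_extend (negbT f0)) /mkseq /= eqxx.
rewrite /=; case ax: (a == linv x); case f0: (f 0%N == linv x).
- rewrite (pushb_cancel f0) /exit_letter /= mkseq_cons eqseq_cons (eqP f0) -(eqP ax) eqxx /=.
  by case: ifP => // v'f; case: v' rv v'f.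
- rewrite (pushb_extend (negbT f0)) /exit_letter /= mkseq_cons eqseq_cons.
  rewrite (eqP ax) f0 /=; case: v' rv => [|b v''] rv //=.
  rewrite mkseq_cons eqseq_cons.
  have : b != x by have := reduced_cons2 rv; rewrite (eqP ax) linvK.
  by rewrite eq_sym => /negbTE ->.
- rewrite (pushb_cancel f0) /exit_letter /= mkseq_cons eqseq_cons f1x //=.
  by rewrite [mkseq f _]mkseq_cons eqseq_cons (eqP f0) eq_sym ax.
- by rewrite (pushb_extend (negbT f0)) /exit_letter /= mkseq_cons eqseq_cons eqxx.
Qed.

Lemma exit_letter_single x f b :
  ray_reduced f -> exit_letter [:: linv x] f = Some b -> b != x.
Proof.
move=> rf; rewrite /exit_letter /mkseq /=; case: ifP => // /eqP [f0] [<-].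
by have := rf 0%N; rewrite f0 linvK.
Qed.

Lemma push_exit_inj x v f1 f2 : reduced v -> ray_reduced f1 -> ray_reduced f2 ->
  push_exit x v (exit_letter v f1) = push_exit x v (exit_letter v f2) ->
  exit_letter v f1 = exit_letter v f2.
Proof.
move=> rv r1 r2; case: v rv => [|a v'] rv.
  rewrite /exit_letter /= /mkseq /=.
  by case: ifP => e1; case: ifP => e2 // _; rewrite (eqP e1) (eqP e2).
rewrite /=; case ax: (a == linv x) => //.
case e1: (exit_letter (a :: v') f1) => [b1|]; case e2: (exit_letter (a :: v') f2) => [b2|] //.
  case: v' rv e1 e2 => [|c v''] rv e1 e2 //= [b1x].
  by move: e1; rewrite (eqP ax) b1x => /(exit_letter_single r1); rewrite eqxx.
case: v' rv e1 e2 => [|c v''] rv e1 e2 //= [b2x].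
by move: e2; rewrite (eqP ax) -b2x => /(exit_letter_single r2); rewrite eqxx.
Qed.

Lemma exit_letter_push_neq x v f1 f2 : reduced v -> ray_reduced f1 -> ray_reduced f2 ->
  (exit_letter (pushw x v) (pushb x f1) != exit_letter (pushw x v) (pushb x f2)) =
  (exit_letter v f1 != exit_letter v f2).
Proof.
move=> rv r1 r2; rewrite !exit_letter_push //; congr negb.
by apply/eqP/eqP => [|-> //]; exact: push_exit_inj.
Qed.

Lemma pushw_reduced (x : letter) w : reduced w -> reduced (pushw x w).
Proof.
case: w => [|y w] //= rw; case: ifP => yx; last by rewrite /reduced /= yx.
by move: rw; rewrite /reduced /= => /path_sorted.
Qed.

Lemma mulw_reduced (g : seq letter) w : reduced w -> reduced (mulw g w).
Proof. by elim: g => [|x g IH] //= rw; apply/pushw_reduced/IH. Qed.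

Lemma pushwK (x : letter) w : reduced w -> pushw (linv x) (pushw x w) = w.
Proof.
case: w => [|y w] rw /=; first by rewrite linvK eqxx.
case: ifP => yx /=; last by rewrite linvK eqxx.
case: w rw => [|z w] rw /=; first by rewrite (eqP yx).
have : z != x by move: rw; rewrite /reduced /= (eqP yx) linvK => /andP [].
by move=> /negbTE; rewrite linvK => ->; rewrite (eqP yx).
Qed.

Lemma mulwK (g : seq letter) w : reduced w -> mulw (winv g) (mulw g w) = w.
Proof.
elim: g w => [|x g IH] w rw //=.
by rewrite winv_cons /mulw foldr_cat /= pushwK; [exact: IH|exact: mulw_reduced].
Qed.

Definition vmul (g : seq letter) (u : vertex) : vertex :=
  exist _ (mulw g (val u)) (mulw_reduced g (valP u)).

Definition vimg (g : seq letter) (A : set vertex) : set vertex :=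
  [set v : vertex | exists u, A u /\ val v = mulw g (val u)].

Lemma vmul_inj g : injective (vmul g).
Proof.
move=> u1 u2 /(congr1 val) /= e; apply/val_inj.
by rewrite -(mulwK g (valP u1)) e mulwK //; exact: valP.
Qed.

Lemma vimgE g A v : vimg g A v <-> exists2 u, A u & v = vmul g u.
Proof. by split=> [[u [Au e]]|[u Au ->]]; exists u => //; apply/val_inj. Qed.

Lemma vimg_inj g : injective (vimg g).
Proof.
move=> A B AB; apply/seteqP; split=> u Au.
  have : vimg g B (vmul g u) by rewrite -AB; apply/vimgE; exists u.
  by move=> /vimgE [u' Bu' /vmul_inj ->].
have : vimg g A (vmul g u) by rewrite AB; apply/vimgE; exists u.
by move=> /vimgE [u' Au' /vmul_inj ->].
Qed.

Lemma vimgI g A B : vimg g (A `&` B) = vimg g A `&` vimg g B.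
Proof.
apply/seteqP; split=> v.
  by move=> /vimgE [u [Au Bu] ->]; split; apply/vimgE; exists u.
move=> [/vimgE [u Au ->] /vimgE [u' Bu' /vmul_inj uu']].
by apply/vimgE; exists u => //; split; rewrite // uu'.
Qed.

Lemma Conv_bact1 (x : letter) (S : set bdry) :
  Conv (bact [:: x] @` S) = vimg [:: x] (Conv S).
Proof.
apply/seteqP; split=> v.
  move=> [_ [_ [[xi Sxi <-] [eta Seta <-] xe]]]; rewrite on_geodE => og.
  pose u := vmul [:: linv x] v.
  have uv : mulw [:: x] (val u) = val v by rewrite /= -{1}(linvK x) pushwK //; exact: valP.
  exists u; split=> //; exists xi, eta; split=> //; first by move=> e; apply: xe; rewrite e.
  apply/on_geodE; move: og; rewrite -uv /= exit_letter_push_neq //;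
    [exact: (valP u)|exact: (svalP xi)|exact: (svalP eta)].
move=> [u [[xi [eta [Sxi Seta xe og]]] vu]].
exists (bact [:: x] xi), (bact [:: x] eta); split; [by exists xi|by exists eta| |].
  by move=> /(congr1 (bact (winv [:: x]))); rewrite !bactK.
by apply/on_geodE; move: og => /on_geodE; rewrite vu /= exit_letter_push_neq //;
  [exact: (valP u)|exact: (svalP xi)|exact: (svalP eta)].
Qed.

Lemma Conv_bact (g : seq letter) (S : set bdry) : Conv (bact g @` S) = vimg g (Conv S).
Proof.
elim: g S => [|x g IH] S.
  rewrite (_ : bact [::] @` S = S).
    by apply/seteqP; split=> v => [Cv|[u [Cu vu]]]; [exists v|rewrite (_ : v = u) //; exact/val_inj].
  apply/seteqP; split=> xi; first by move=> [eta Seta <-]; rewrite (_ : bact [::] eta = eta) //; exact: sval_inj.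
  by move=> Sxi; exists xi => //; exact: sval_inj.
rewrite (_ : bact (x :: g) @` S = bact [:: x] @` (bact g @` S)).
  rewrite Conv_bact1 IH; apply/seteqP; split=> v.
    by move=> [w [[u [Cu wu]] vw]]; exists u; split=> //; rewrite vw wu.
  by move=> [u [Cu vu]]; exists (vmul g u); split; [exists u|].
apply/seteqP; split=> xi.
  by move=> [eta Seta <-]; exists (bact g eta); [exists eta|exact: sval_inj].
by move=> [_ [eta Seta <-] <-]; exists eta => //; exact: sval_inj.
Qed.

End ConvEquivariance.

Local Open Scope ring_scope.

Lemma continuous_indic (X : topologicalType) (R : realType) (A : set X) :
  open A -> open (~` A) -> continuous (\1_A : X -> R).
Proof.
move=> oA oAC x; have [Ax|nAx] := pselect (A x).
  apply: (@near_cst_continuous _ _ (1 : R)); apply: filterS (open_nbhs_nbhs (conj oA Ax)).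
  by move=> y Ay; rewrite indicE mem_set.
apply: (@near_cst_continuous _ _ (0 : R)); apply: filterS (open_nbhs_nbhs (conj oAC nAx)).
by move=> y nAy; rewrite indicE memNset.
Qed.

Section RectangleMeasure.
Variable n : nat.
Local Notation CN := (CN n).
Local Notation vertex := (vertex n).

Lemma measurable_open (A : set (CNm n)) : @open CN A -> measurable A.
Proof. exact: sub_sigma_algebra. Qed.

Variable T : set vertex.
Hypotheses (fT : finite_set T) (T1 : T (vone n)).
Local Notation P := {ffun 'I_(npat T) -> bool}.
Local Notation pattern_set := (@pattern_set n T).
Local Notation compatible := (@compatible n T).

Lemma measurable_pattern_set p : measurable (pattern_set p : set (CNm n)).
Proof. by apply: measurable_open; exact: open_pattern_set. Qed.

Lemma RR_measureE (R : realType) (mu nu : {measure set CNm n -> \bar R}) :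
  (mu \x nu)%E (RR T) =
  (\sum_p mu (pattern_set p) * \sum_(q | compatible p q) nu (pattern_set q))%E.
Proof.
rewrite (RR_patternE fT T1).
exact: product_measure_rects compatible measurable_pattern_set measurable_pattern_set
  (@pattern_set_disj n T) (@pattern_set_disj n T) mu nu.
Qed.

Lemma RR_vtranslateE (g : vertex) : RR (vtranslate g T) =
  [set X | exists p q, [/\ compatible p q,
     ctranslate g (pattern_set p) X.1 & ctranslate g (pattern_set q) X.2]].
Proof.
have vtranslateE A : vtranslate g A = vimg (val g) A by [].
apply/seteqP; split=> X.
  move=> RX; pose S1 := cact (winv (val g)) X.1; pose S2 := cact (winv (val g)) X.2.
  have RS : RR T ((S1, S2) : CNm n * CNm n).
    apply: (@vimg_inj _ (val g)); rewrite vimgI -!Conv_bact !bact_imageK.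
    by rewrite -vtranslateE.
  move: RS; rewrite (RR_patternE fT T1) => -[p [q [pq pS1 qS2]]].
  by exists p, q; split=> //; apply/ctranslateE; [exists S1|exists S2]; rewrite // cactKV.
move=> [p [q [pq /ctranslateE [S1 pS1 e1] /ctranslateE [S2 qS2 e2]]]].
have : RR T ((S1, S2) : CNm n * CNm n) by rewrite (RR_patternE fT T1); exists p, q.
by rewrite /RR /= e1 e2 !Conv_bact -vimgI => ->.
Qed.

Lemma RR_measure_vtranslate (R : realType) (g : vertex)
    (mu nu : {measure set CNm n -> \bar R}) :
  SCurr mu -> SCurr nu -> (mu \x nu)%E (RR (vtranslate g T)) = (mu \x nu)%E (RR T).
Proof.
move=> [mu_inv _] [nu_inv _]; rewrite RR_measureE RR_vtranslateE.
have mtrans p : measurable (ctranslate g (pattern_set p) : set (CNm n)).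
  by apply: measurable_open; apply: open_ctranslate; exact: open_pattern_set.
have dtrans p q S : ctranslate g (pattern_set p) S -> ctranslate g (pattern_set q) S -> p = q.
  by rewrite !ctranslate_preimage; exact: pattern_set_disj.
rewrite (product_measure_rects compatible mtrans mtrans dtrans dtrans); apply: eq_bigr => p _.
rewrite mu_inv; last exact: measurable_pattern_set.
by congr (_ * _)%E; apply: eq_bigr => q _; rewrite nu_inv //; exact: measurable_pattern_set.
Qed.

Section Masses.
Variable R : realType.

Definition mass (mu : {measure set CNm n -> \bar R}) (p : P) : R := fine (mu (pattern_set p)).

Lemma SCurr_pattern_setE (mu : {measure set CNm n -> \bar R}) p :
  SCurr mu -> mu (pattern_set p) = (mass mu p)%:E.
Proof.
move=> [_ mu_fin]; rewrite /mass fineK // ge0_fin_numE ?measure_ge0 //.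
exact/mu_fin/compact_pattern_set.
Qed.

Lemma RR_measure_compat_form (mu nu : {measure set CNm n -> \bar R}) :
  SCurr mu -> SCurr nu -> (mu \x nu)%E (RR T) = (compat_form compatible (mass mu) (mass nu))%:E.
Proof.
move=> smu snu; rewrite RR_measureE /compat_form -sumEFin; apply: eq_bigr => p _.
rewrite EFinM -sumEFin (SCurr_pattern_setE _ smu); congr (_ * _)%E.
by apply: eq_bigr => q _; rewrite (SCurr_pattern_setE _ snu).
Qed.

Lemma RR_measure_linear (mu1 mu2 mu3 nu : {measure set CNm n -> \bar R}) (a b : R) :
  SCurr mu1 -> SCurr mu2 -> SCurr mu3 -> SCurr nu ->
  (forall A, measurable A -> mu3 A = (a%:E * mu1 A + b%:E * mu2 A)%E) ->
  (mu3 \x nu)%E (RR T) = (a%:E * (mu1 \x nu) (RR T) + b%:E * (mu2 \x nu) (RR T))%E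
  /\ (nu \x mu3)%E (RR T) = (a%:E * (nu \x mu1) (RR T) + b%:E * (nu \x mu2) (RR T))%E.
Proof.
move=> s1 s2 s3 sn mu3E.
have mass3 : mass mu3 = (fun p => a * mass mu1 p + b * mass mu2 p).
  apply: funext => p; rewrite /mass mu3E; last exact: measurable_pattern_set.
  by rewrite (SCurr_pattern_setE _ s1) (SCurr_pattern_setE _ s2).
rewrite !RR_measure_compat_form // mass3 compat_form_linearl compat_form_linearr.
by split; rewrite EFinD !EFinM.
Qed.

Lemma RR_measure_weak_continuous (mu nu : {measure set CNm n -> \bar R}) :
  SCurr mu -> SCurr nu -> forall e : R, 0 < e ->
  exists (k : nat) (F : nat -> CN -> R), (forall i, (i < k)%N -> Cc (F i)) /\
  exists2 d : R, 0 < d &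
  forall mu' nu' : {measure set CNm n -> \bar R}, SCurr mu' -> SCurr nu' ->
    (forall i, (i < k)%N ->
       (`| \int[mu']_S (F i S)%:E - \int[mu]_S (F i S)%:E | < d%:E)%E /\
       (`| \int[nu']_S (F i S)%:E - \int[nu]_S (F i S)%:E | < d%:E)%E) ->
    (`| (mu' \x nu') (RR T) - (mu \x nu) (RR T) | < e%:E)%E.
Proof.
move=> smu snu e e0.
have [d d0 close] := compat_form_continuous compatible (mass mu) (mass nu) e0.
(* Test against the indicators of the pattern sets, which are clopen and compact. *)
pose F i := \1_(pattern_set (nth [ffun=> false] (enum P) i)) : CN -> R.
exists (size (enum P)), F; split.
  move=> i _; split.
    by apply: continuous_indic; [exact: open_pattern_set|apply/closed_openC/closed_pattern_set].
  exists (pattern_set (nth [ffun=> false] (enum P) i)); split; first exact: compact_pattern_set.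
  by move=> S nS; rewrite /F indicE memNset.
exists d => // mu' nu' smu' snu' Fclose.
have intF (m : {measure set CNm n -> \bar R}) i :
    (\int[m]_S (F i S)%:E)%E = m (pattern_set (nth [ffun=> false] (enum P) i)).
  by rewrite integral_indic ?setIT //; exact: measurable_pattern_set.
rewrite !RR_measure_compat_form // -EFinB abse_EFin lte_fin; apply: close => p.
have pP : p \in enum P by rewrite mem_enum.
have [] := Fclose (index p (enum P)); first by rewrite index_mem.
rewrite !intF nth_index // (SCurr_pattern_setE _ smu') (SCurr_pattern_setE _ smu).
rewrite (SCurr_pattern_setE _ snu') (SCurr_pattern_setE _ snu).
by rewrite -!EFinB !abse_EFin !lte_fin.
Qed.

End Masses.
End RectangleMeasure.

Theorem mainTheorem8 (n : nat) (R : realType) (T T' : set (vertex n)) :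
  subtree1 T -> subtree1 T' ->
  (T <> T' -> RR T `&` RR T' = set0) /\
  ((exists g : vertex n, vtranslate g T = T') ->
     forall mu nu : {measure set CNm n -> \bar R}, SCurr mu -> SCurr nu ->
       (mu \x nu)%E (RR T) = (mu \x nu)%E (RR T')) /\
  ((forall mu nu : {measure set CNm n -> \bar R}, SCurr mu -> SCurr nu ->
       (mu \x nu)%E (RR T) \is a fin_num) /\
   (forall (mu1 mu2 mu3 nu : {measure set CNm n -> \bar R}) (a b : R),
       SCurr mu1 -> SCurr mu2 -> SCurr mu3 -> SCurr nu -> 0 <= a -> 0 <= b ->
       (forall A, measurable A -> mu3 A = (a%:E * mu1 A + b%:E * mu2 A)%E) ->
       (mu3 \x nu)%E (RR T) = (a%:E * (mu1 \x nu) (RR T) + b%:E * (mu2 \x nu) (RR T))%E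
       /\ (nu \x mu3)%E (RR T) = (a%:E * (nu \x mu1) (RR T) + b%:E * (nu \x mu2) (RR T))%E) /\
   (forall mu nu : {measure set CNm n -> \bar R}, SCurr mu -> SCurr nu ->
     forall e : R, 0 < e ->
     exists (k : nat) (F : nat -> CN n -> R), (forall i, (i < k)%N -> Cc (F i)) /\
     exists2 d : R, 0 < d &
     forall mu' nu' : {measure set CNm n -> \bar R}, SCurr mu' -> SCurr nu' ->
       (forall i, (i < k)%N ->
          (`| \int[mu']_S (F i S)%:E - \int[mu]_S (F i S)%:E | < d%:E)%E /\
          (`| \int[nu']_S (F i S)%:E - \int[nu]_S (F i S)%:E | < d%:E)%E) ->
       (`| (mu' \x nu') (RR T) - (mu \x nu) (RR T) | < e%:E)%E)).
Proof.
move=> [fT T1 _] _; split.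
  move=> TT'; apply/seteqP; split=> X // [RX RX']; apply: TT'.
  by rewrite -RX -RX'.
split; first by move=> [g <-] mu nu smu snu; rewrite RR_measure_vtranslate.
split; first by move=> mu nu smu snu; rewrite RR_measure_compat_form.
split; first by move=> mu1 mu2 mu3 nu a b s1 s2 s3 sn _ _; exact: RR_measure_linear.
exact: RR_measure_weak_continuous.
Qed.
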